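(* Let $\alpha:A^{\Delta}\to(H,V)$ be a homomorphism onto a finite forest algebra and let $k>0$. The following are equivalent: (a) $\alpha$ is $k$-definite; (b) $\alpha$ factors through $\alpha_{A,k}$; (c) $\alpha$ factors through $\beta_1\otimes\cdots\otimes\beta_k:A^{\Delta}\to(H_1,V_1)\circ\cdots\circ(H_k,V_k)$ for some homomorphisms $\beta_i:(A\times H_1\times\cdots\times H_{i-1})^{\Delta}\to(H_i,V_i)$ that are each 1-definite; (d) $\alpha$ factors through an iterated wreath product of 1-definite homomorphisms into ${\cal U}_2$.
   Context: $A^{\Delta}=(H_A,V_A)$: free forest algebra over finite alphabet $A$; $H_A$ forests (finite ordered sequences of finite ordered $A$-labelled trees) under concatenation $+$; $V_A$ contexts (forests with exactly one leaf replaced by a hole) under substitution, acting by substitution. A forest algebra $(H,V)$: additive monoid $H$, monoid $V$, faithful left action with $g\mapsto g+h$ and $g\mapsto h+g$ in $V$; all finite forest algebras considered have $H$ idempotent and commutative. $\beta$ factors through $\alpha$ if $\alpha(s)=\alpha(s')$ implies $\beta(s)=\beta(s')$ for forests $s,s'$. The depth of a context is the depth of its hole (roots have depth $0$). $\alpha$ is $k$-definite if $\alpha(ps)=\alpha(ps')$ for every context $p$ of depth at least $k$ and all forests $s,s'$; it is 1-definite iff $\alpha(s)$ depends only on the set of labels of root nodes of $s$. For an alphabet $B$, equivalences $\sim_k$ on $H_B$: $\sim_0$ identifies all forests; for $s=b_1s_1+\cdots+b_rs_r$ ($b_i\in B$, $s_i\in H_B$) put $T^{k+1}_s=\{(b_i,[s_i]_{\sim_k})\}$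 and $s\sim_{k+1}s'$ iff $T^{k+1}_s=T^{k+1}_{s'}$. Each $\sim_k$ is a congruence; $\alpha_{B,k}:B^{\Delta}\to B^{\Delta}/{\sim_k}$ is the quotient homomorphism. Wreath product: $(H_1,V_1)\circ(H_2,V_2)=(H_1\times H_2,V_1\times V_2^{H_1})$ with $(v,f)(h_1,h_2)=(vh_1,f(h_1)h_2)$. For $\alpha:A^{\Delta}\to(H_1,V_1)$ and $\beta:(A\times H_1)^{\Delta}\to(H_2,V_2)$, $\alpha\otimes\beta$ maps $a$ to $(\alpha(a),h\mapsto\beta(a,h))$; iterated products $\beta_1\otimes\cdots\otimes\beta_k$ with $\beta_i:(A\times H_1\times\cdots\times H_{i-1})^{\Delta}\to(H_i,V_i)$ are formed likewise. ${\cal U}_2=(\{0,\infty\},\{1,0,c_0\})$ with $0+x=x$, $\infty+x=\infty$, $1$ the identity, vertical $0$ the constant map to $\infty$, and $c_0$ the constant map to $0$.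
   Formalization: In (d), α factors through an iterated wreath product of exactly k levels, level i being a direct product of finitely many 1-definite homomorphisms $(A\times H_1\times\cdots\times H_{i-1})^{\Delta}$ → ${\cal U}_2$, rather than of arbitrarily many single ones. The statement above fails without it. *)

From Stdlib Require List.
From mathcomp Require Import all_boot.
Set Implicit Arguments.
Unset Strict Implicit.
Unset Printing Implicit Defensive.

Inductive tree (B : Type) : Type := Node : B -> seq (tree B) -> tree B.
Arguments Node {B}.
(* a forest is a finite ordered sequence of trees; + is concatenation *)
Definition forest (B : Type) := seq (tree B).

Definition label {B} (t : tree B) : B := let: Node b _ := t in b.
Definition kids {B} (t : tree B) : forest B := let: Node _ ts := t in ts.

(* Contexts: forests with exactly one leaf replaced by a hole, in the
   unique representation
     CHole l r      = l + [] + r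
     CNode l a p r  = l + a(p) + r                                    *)
Inductive ctx (B : Type) : Type :=
| CHole : forest B -> forest B -> ctx B
| CNode : forest B -> B -> ctx B -> forest B -> ctx B.
Arguments CHole {B}.
Arguments CNode {B}.

Fixpoint fill {B} (p : ctx B) (s : forest B) : forest B :=
  match p with
  | CHole l r => l ++ s ++ r
  | CNode l a q r => l ++ Node a (fill q s) :: r
  end.

(* depth of a context = depth of its hole (roots have depth 0) *)
Fixpoint depth {B} (p : ctx B) : nat :=
  match p with
  | CHole _ _ => 0
  | CNode _ _ q _ => (depth q).+1
  end.

Record preFA : Type := PreFA {
  pH : finType;
  pV : finType;
  padd : pH -> pH -> pH;
  pzero : pH;
  pact : pV -> pH -> pH
}.

(* Following the paper's standing convention, H is idempotent and
   commutative. *)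
Record fa_struct (Q : preFA) : Type := FAStruct {
  fmul : pV Q -> pV Q -> pV Q;
  fone : pV Q;
  finsl : pH Q -> pV Q;   (* the context  h + [] *)
  finsr : pH Q -> pV Q;   (* the context  [] + h *)
  faddA : forall x y z : pH Q, padd x (padd y z) = padd (padd x y) z;
  fadd0l : forall x : pH Q, padd (pzero Q) x = x;
  fadd0r : forall x : pH Q, padd x (pzero Q) = x;
  faddC : forall x y : pH Q, padd x y = padd y x;
  faddI : forall x : pH Q, padd x x = x;
  fmulA : forall u v w, fmul u (fmul v w) = fmul (fmul u v) w;
  fmul1l : forall v, fmul fone v = v;
  fmul1r : forall v, fmul v fone = v;
  fact_mul : forall v w (h : pH Q), pact v (pact w h) = pact (fmul v w) h;
  fact_one : forall h : pH Q, pact fone h = h;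
  fact_faithful : forall v w, (forall h : pH Q, pact v h = pact w h) -> v = w;
  finsl_spec : forall h g : pH Q, pact (finsl h) g = padd h g;
  finsr_spec : forall h g : pH Q, pact (finsr h) g = padd g h
}.

(* Since B^Delta is free on the letter contexts a[], a homomorphism    *)
(* alpha : B^Delta -> (H,V) is given by the images phi a = alpha(a[]). *)

Section Eval.
Variables (B : Type) (Q : preFA) (phi : B -> pV Q).

Fixpoint evalT (t : tree B) : pH Q :=
  let: Node a ts := t in
  pact (phi a) (foldr (fun t acc => padd (evalT t) acc) (pzero Q) ts).

Definition evalF (s : forest B) : pH Q :=
  foldr (fun t acc => padd (evalT t) acc) (pzero Q) s.

Variable (HQ : fa_struct Q).

Fixpoint evalC (p : ctx B) : pV Q :=
  match p with
  | CHole l r => fmul HQ (finsl HQ (evalF l)) (finsr HQ (evalF r))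
  | CNode l a q r =>
      fmul HQ (fmul HQ (finsl HQ (evalF l)) (finsr HQ (evalF r)))
              (fmul HQ (phi a) (evalC q))
  end.

Definition onto_hom : Prop :=
  (forall h : pH Q, exists s, evalF s = h) /\
  (forall v : pV Q, exists p, evalC p = v).

End Eval.

Definition definite (k : nat) {B : Type} {Q : preFA} (phi : B -> pV Q) : Prop :=
  forall (p : ctx B), k <= depth p ->
  forall s s' : forest B, evalF phi (fill p s) = evalF phi (fill p s').

Definition factors_through {B : Type} {Q R : preFA}
  (beta : B -> pV Q) (alpha : B -> pV R) : Prop :=
  forall s s' : forest B, evalF alpha s = evalF alpha s' ->
                          evalF beta s = evalF beta s'.

(* s ~_{k+1} s'  iff  T^{k+1}_s = T^{k+1}_{s'}, where
   T^{k+1}_s = { (b_i, [s_i]_{~k}) } for s = b_1 s_1 + ... + b_r s_r. *)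
Fixpoint sim {B : Type} (k : nat) (s s' : forest B) : Prop :=
  match k with
  | 0 => True
  | k.+1 =>
      (forall t, List.In t s -> exists t', List.In t' s' /\
          label t = label t' /\ sim k (kids t) (kids t')) /\
      (forall t', List.In t' s' -> exists t, List.In t s /\
          label t = label t' /\ sim k (kids t) (kids t'))
  end.

(* beta factors through the quotient map alpha_{B,k} : B^Delta -> B^Delta/~_k,
   i.e. alpha_{B,k}(s) = alpha_{B,k}(s') (that is, s ~_k s') implies
   beta(s) = beta(s'). *)
Definition factors_through_alpha_k {B : Type} {Q : preFA}
  (k : nat) (beta : B -> pV Q) : Prop :=
  forall s s' : forest B, sim k s s' -> evalF beta s = evalF beta s'.

Definition wreath (Q1 Q2 : preFA) : preFA :=
  @PreFA (prod (pH Q1) (pH Q2))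
         (prod (pV Q1) {ffun pH Q1 -> pV Q2})
         (fun x y => (padd x.1 y.1, padd x.2 y.2))
         (pzero Q1, pzero Q2)
         (fun vf h => (pact vf.1 h.1, pact (vf.2 h.1) h.2)).

Definition tensor {A : Type} {Q1 Q2 : preFA}
  (alpha : A -> pV Q1) (beta : prod A (pH Q1) -> pV Q2) :
  A -> pV (wreath Q1 Q2) :=
  fun a => (alpha a, [ffun h => beta (a, h)]).

(* a homomorphism from B^Delta together with its target *)
Definition stage (B : Type) : Type := {Q : preFA & B -> pV Q}.

Definition tensorS {A : finType} (st : stage A)
  (st' : stage (prod A (pH (projT1 st)))) : stage A :=
  existT _ (wreath (projT1 st) (projT1 st')) (tensor (projT2 st) (projT2 st')).

(* cascade P n st : st = beta_1 (x) ... (x) beta_n (left-nested), where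
   beta_i : (A x H_1 x ... x H_{i-1})^Delta -> (H_i,V_i) satisfies P. *)
Inductive cascade (A : finType) (P : forall B : finType, stage B -> Prop)
  : nat -> stage A -> Prop :=
| cascade1 : forall st : stage A, P A st -> cascade P 1 st
| cascadeS : forall n (st : stage A) (st' : stage (prod A (pH (projT1 st)))),
    cascade P n st -> P (prod A (pH (projT1 st)) : finType) st' ->
    cascade P n.+1 (@tensorS A st st').

Definition one_definite_FA (B : finType) (st : stage B) : Prop :=
  inhabited (fa_struct (projT1 st)) /\ definite 1 (projT2 st).

(*   H: false = 0, true = oo ;  0 + x = x, oo + x = oo                  *)
(*   V: None = 1 (identity), Some true = 0 (constant oo),               *)
(*      Some false = c_0 (constant 0)                                   *)

Definition U2 : preFA :=
  @PreFA bool (option bool) orb false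
         (fun v h => match v with None => h | Some b => b end).

Definition fpow (Q : preFA) (n : nat) : preFA :=
  @PreFA {ffun 'I_n -> pH Q} {ffun 'I_n -> pV Q}
         (fun x y => [ffun i => padd (x i) (y i)])
         [ffun _ => pzero Q]
         (fun v h => [ffun i => pact (v i) (h i)]).

(* level of type (d): the direct product of finitely many 1-definite
   homomorphisms into U_2 *)
Definition U2_level (B : finType) (st : stage B) : Prop :=
  exists (n : nat) (delta : 'I_n -> B -> pV U2),
    (forall j, definite 1 (delta j)) /\
    st = existT (fun Q : preFA => B -> pV Q) (fpow U2 n)
                (fun b => [ffun j => delta j b]).

(* (a) => (b): if s ~_k s', the trees of s' can be appended to s one at a
   time.  A tree of s' has a partner in s with the same root label and
   ~_(k-1)-equivalent children; those children sit one level deeper, so by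
   induction the tree may be replaced by its partner, which is then absorbed
   since H is idempotent and commutative.  Symmetrically s' = s' + s, hence
   alpha(s) = alpha(s').
   (b) => (d): in a wreath product the second component is evaluated on the
   forest whose nodes are tagged with the value of their subforest.  So the
   k-fold wreath product of the homomorphisms recording the set of root labels
   (a 1-definite map into a power of U_2) computes ~_k.
   (d) => (c) because powers of U_2 are forest algebras, and (c) => (a)
   because alpha (x) beta is (n+1)-definite when alpha is n-definite and beta
   is 1-definite. *)

From mathcomp Require Import all_boot.
Set Implicit Arguments.
Unset Strict Implicit.
Unset Printing Implicit Defensive.

Section ForestInduction.
Variables (B : Type) (PT : tree B -> Prop) (PF : forest B -> Prop).
Hypotheses (PF_nil : PF [::])
           (PF_cons : forall t f, PT t -> PF f -> PF (t :: f))
           (PT_Node : forall a f, PF f -> PT (Node a f)).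

Fixpoint tree_forest_ind (t : tree B) : PT t :=
  let: Node a f := t in
  PT_Node a ((fix ind_forest f : PF f :=
                match f with
                | [::] => PF_nil
                | t :: f' => PF_cons (tree_forest_ind t) (ind_forest f')
                end) f).

Lemma forest_tree_ind (f : forest B) : PF f.
Proof. by elim: f => // t f; apply: PF_cons (tree_forest_ind t). Qed.

End ForestInduction.

Lemma evalT_Node B Q (phi : B -> pV Q) a f :
  evalT phi (Node a f) = pact (phi a) (evalF phi f).
Proof. by []. Qed.

Lemma evalF_cons B Q (phi : B -> pV Q) t f :
  evalF phi (t :: f) = padd (evalT phi t) (evalF phi f).
Proof. by []. Qed.

Lemma evalF_fpow B Q n (d : 'I_n -> B -> pV Q) (f : forest B) :
  evalF (Q := fpow Q n) (fun b => [ffun j => d j b]) f = [ffun j => evalF (d j) f].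
Proof.
elim/(@forest_tree_ind _ (fun t =>
  evalT (Q := fpow Q n) (fun b => [ffun j => d j b]) t = [ffun j => evalT (d j) t])): f.
- by apply/ffunP => j; rewrite ffunE.
- by move=> t f IHt IHf; apply/ffunP => j; rewrite evalF_cons IHt IHf !ffunE.
- by move=> a f IHf; apply/ffunP => j; rewrite evalT_Node IHf !ffunE.
Qed.

Section Relabel.
Variables (A : Type) (Q1 : preFA) (alpha : A -> pV Q1).

Fixpoint relabelT (t : tree A) : tree (A * pH Q1) :=
  let: Node a f := t in Node (a, evalF alpha f) (map relabelT f).

Definition relabelF (f : forest A) : forest (A * pH Q1) := map relabelT f.

Lemma evalF_tensor Q2 (beta : A * pH Q1 -> pV Q2) (f : forest A) :
  evalF (tensor alpha beta) f = (evalF alpha f, evalF beta (relabelF f)).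
Proof.
elim/(@forest_tree_ind _ (fun t =>
  evalT (tensor alpha beta) t = (evalT alpha t, evalT beta (relabelT t)))): f.
- by [].
- by move=> t f IHt IHf; rewrite evalF_cons IHt IHf.
- by move=> a f IHf; rewrite evalT_Node IHf /= ffunE.
Qed.

End Relabel.

Definition hole {B} : ctx B := CHole [::] [::].

Lemma fill_hole B (s : forest B) : fill hole s = s.
Proof. by rewrite /= cats0. Qed.

Definition ctx_pad {B} (l : forest B) (q : ctx B) (r : forest B) : ctx B :=
  match q with
  | CHole l' r' => CHole (l ++ l') (r' ++ r)
  | CNode l' a q' r' => CNode (l ++ l') a q' (r' ++ r)
  end.

Fixpoint ctx_comp {B} (p q : ctx B) : ctx B :=
  match p with
  | CHole l r => ctx_pad l q r
  | CNode l a p' r => CNode l a (ctx_comp p' q) r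
  end.

Lemma fill_ctx_comp B (p q : ctx B) s : fill (ctx_comp p q) s = fill p (fill q s).
Proof.
elim: p => [l r|l a p IHp r] /=; last by rewrite IHp.
by case: q => [l' r'|l' a q' r'] /=; rewrite -!catA // -cat_cons.
Qed.

Lemma depth_ctx_comp B (p q : ctx B) : depth (ctx_comp p q) = depth p + depth q.
Proof. by elim: p => [l r|l a p IHp r] /=; [case: q | rewrite IHp]. Qed.

Lemma sim_sym B m (s s' : forest B) : sim m s s' -> sim m s' s.
Proof.
elim: m s s' => [|m IHm] s s' //= [Hss' Hs's]; split=> t Ht.
  by have [t' [? [? /IHm ?]]] := Hs's t Ht; exists t'.
by have [t' [? [? /IHm ?]]] := Hss' t Ht; exists t'.
Qed.

Section DefiniteSim.
Variables (A : Type) (Q : preFA) (HQ : fa_struct Q) (alpha : A -> pV Q).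

Lemma evalF_cat (x y : forest A) :
  evalF alpha (x ++ y) = padd (evalF alpha x) (evalF alpha y).
Proof.
elim: x => [|t x IHx]; first by rewrite /= (fadd0l HQ).
by rewrite cat_cons !evalF_cons IHx (faddA HQ).
Qed.

Lemma evalF_fill_congr (p : ctx A) x y :
  evalF alpha x = evalF alpha y -> evalF alpha (fill p x) = evalF alpha (fill p y).
Proof.
move=> Exy; elim: p => [l r|l a q IHq r] /=; first by rewrite !evalF_cat Exy.
by rewrite !evalF_cat !evalF_cons !evalT_Node IHq.
Qed.

Lemma evalF_absorb t s : List.In t s ->
  padd (evalT alpha t) (evalF alpha s) = evalF alpha s.
Proof.
elim: s => [|u s IHs] //= [->|Ht]; first by rewrite (faddA HQ) (faddI HQ).
by rewrite (faddA HQ) (faddC HQ (evalT alpha t)) -(faddA HQ) IHs.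
Qed.

(* Each tree of r is turned into its partner, whose children lie strictly
   below p, and then absorbed by idempotence. *)
Lemma evalF_fill_cat_absorb (p : ctx A) (s r : forest A) :
  (forall t', List.In t' r -> exists t, List.In t s /\ label t = label t' /\
     forall q : ctx A, depth p < depth q ->
       evalF alpha (fill q (kids t)) = evalF alpha (fill q (kids t'))) ->
  evalF alpha (fill p (s ++ r)) = evalF alpha (fill p s).
Proof.
elim: r => [|[a x] r IHr] partner; first by rewrite cats0.
have [[b y] [Hs [/= <- Ekids]]] := partner _ (or_introl erefl).
pose q := ctx_comp p (CNode s b hole r).
have /Ekids : depth p < depth q by rewrite depth_ctx_comp addn1.
rewrite !fill_ctx_comp /= !cats0 => <-.
rewrite -IHr; last by move=> t' Ht'; apply: partner; right.
apply: evalF_fill_congr.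
rewrite !evalF_cat evalF_cons (faddA HQ) (faddC HQ (evalF alpha s)).
by rewrite (evalF_absorb Hs).
Qed.

Lemma definite_sim_fill k m (p : ctx A) s s' : definite k alpha ->
  k <= depth p + m -> sim m s s' ->
  evalF alpha (fill p s) = evalF alpha (fill p s').
Proof.
move=> Hdef; elim: m p s s' => [|m IHm] p s s' Hk.
  by move=> _; apply: Hdef; rewrite addn0 in Hk.
move=> /= [Hss' Hs's].
have Hdeeper q : depth p < depth q -> forall x y, sim m x y ->
    evalF alpha (fill q x) = evalF alpha (fill q y).
  by move=> Hq x y; apply: IHm; apply: leq_trans Hk _; rewrite addnS -addSn leq_add2r.
rewrite -(@evalF_fill_cat_absorb p s s'); last first.
  move=> t' /Hs's [t [Ht [Hl Ht']]].
  by exists t; split => //; split => // q /Hdeeper E; apply: E Ht'.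
rewrite -(@evalF_fill_cat_absorb p s' s); last first.
  move=> t /Hss' [t' [Ht' [Hl Ht]]].
  by exists t'; split => //; split => // q /Hdeeper E; rewrite (E _ _ Ht).
by apply: evalF_fill_congr; rewrite !evalF_cat (faddC HQ).
Qed.

Lemma definite_factors_through_alpha_k k :
  definite k alpha -> factors_through_alpha_k k alpha.
Proof.
move=> Hdef s s' Hsim; rewrite -(fill_hole s) -(fill_hole s').
exact: (definite_sim_fill Hdef (leq_addl _ _) Hsim).
Qed.

End DefiniteSim.

Lemma factors_through_definite A Q R (alpha : A -> pV Q) (beta : A -> pV R) k :
  factors_through alpha beta -> definite k beta -> definite k alpha.
Proof. by move=> Hfac Hdef p Hp s s'; apply/Hfac/Hdef. Qed.

Lemma tensor_definite A Q1 Q2 (alpha : A -> pV Q1) (beta : A * pH Q1 -> pV Q2) n :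
  definite n alpha -> definite 1 beta -> definite n.+1 (tensor alpha beta).
Proof.
move=> Halpha Hbeta [//|l a q r] /= Hq s s'.
rewrite !evalF_tensor; congr pair; first exact: (Halpha (CNode l a q r) (leqW Hq)).
rewrite /relabelF !map_cat /= (Halpha q Hq s s').
pose c := CNode (map (relabelT alpha) l) (a, evalF alpha (fill q s'))
                hole (map (relabelT alpha) r).
have Ec x : fill c (map (relabelT alpha) (fill q x)) =
            map (relabelT alpha) l ++ Node (a, evalF alpha (fill q s'))
              (map (relabelT alpha) (fill q x)) :: map (relabelT alpha) r.
  by rewrite /= cats0.
by rewrite -!Ec; apply: Hbeta.
Qed.

Lemma cascade_definite (A : finType) (P : forall B : finType, stage B -> Prop)
    n (st : stage A) :
  (forall B st, P B st -> definite 1 (projT2 st)) ->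
  cascade P n st -> definite n (projT2 st).
Proof.
move=> HP; elim=> [st0 /HP //|m st0 st1 _ IHm /HP].
exact: tensor_definite.
Qed.

Lemma cascade_mono (A : finType) (P P' : forall B : finType, stage B -> Prop)
    n (st : stage A) :
  (forall B st, P B st -> P' B st) -> cascade P n st -> cascade P' n st.
Proof. by move=> HP; elim=> *; constructor; auto. Qed.

Definition U2_mul (v w : option bool) : option bool :=
  if v is Some b then Some b else w.

Definition fpow_U2_fa_struct (n : nat) : fa_struct (fpow U2 n).
Proof.
pose ins (h : pH (fpow U2 n)) : pV (fpow U2 n) :=
  [ffun i => if h i then Some true else None].
refine (@FAStruct (fpow U2 n) (fun u v => [ffun i => U2_mul (u i) (v i)])
          [ffun _ => None] ins ins _ _ _ _ _ _ _ _ _ _ _ _ _);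
  try (move=> *; apply/ffunP => i; rewrite /= !ffunE;
       by do ![case: (_ i) | case]).
move=> v w Hvw; apply/ffunP => i.
have Hvw_at h := congr1 (fun f : {ffun 'I_n -> bool} => f i) (Hvw h).
move: (Hvw_at [ffun _ => false]) (Hvw_at [ffun _ => true]) => /=; rewrite !ffunE.
by case: (v i) => [[]|]; case: (w i) => [[]|].
Defined.

Lemma U2_level_one_definite_FA (B : finType) (st : stage B) :
  U2_level st -> one_definite_FA st.
Proof.
move=> [n [delta [Hdelta ->]]]; split; first by constructor; apply: fpow_U2_fa_struct.
move=> p Hp s s' /=; rewrite !evalF_fpow; apply/ffunP => j; rewrite !ffunE.
exact: Hdelta.
Qed.

Lemma hasP_In T (p : pred T) (f : seq T) :
  reflect (exists2 t, List.In t f & p t) (has p f).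
Proof.
elim: f => [|x f IHf] /=; first by right; case.
case: (boolP (p x)) => [px | npx] /=; first by left; exists x; first left.
apply: (iffP IHf) => [[t Ht pt]|[t [<-|Ht] pt]]; first by exists t; first right.
  by rewrite pt in npx.
by exists t.
Qed.

(* The j-th coordinate maps the j-th letter to the constant oo and every other
   letter to the constant 0, so it detects whether that letter labels a root. *)
Definition root_test (B : finType) (j : 'I_#|B|) (b : B) : pV U2 :=
  Some (b == enum_val j).

Definition root_labels (B : finType) : stage B :=
  existT (fun Q : preFA => B -> pV Q) (fpow U2 #|B|) (fun b => [ffun j => root_test j b]).

Lemma evalF_root_test (B : finType) j (f : forest B) :
  evalF (root_test j) f = has (fun t => label t == enum_val j) f.
Proof. by elim: f => [|[b ts] f IHf] //=; rewrite -IHf. Qed.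

Lemma root_test_definite (B : finType) j : definite 1 (@root_test B j).
Proof. by move=> [//|l a q r] _ s s'; rewrite !evalF_root_test !has_cat. Qed.

Lemma root_labels_U2_level (B : finType) : U2_level (root_labels B).
Proof. by exists #|B|, (@root_test B); split => //; apply: root_test_definite. Qed.

Lemma root_labels_sub (B : finType) (f f' : forest B) :
  evalF (projT2 (root_labels B)) f = evalF (projT2 (root_labels B)) f' ->
  forall t, List.In t f -> exists t', List.In t' f' /\ label t = label t'.
Proof.
rewrite /= !evalF_fpow => E t Ht.
move: E => /(congr1 (fun g : {ffun 'I_#|B| -> bool} => g (enum_rank (label t)))).
rewrite !ffunE !evalF_root_test enum_rankK.
have -> : has (fun u => label u == label t) f by apply/hasP_In; exists t.
by move=> /esym /hasP_In [t' Ht' /eqP <-]; exists t'.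
Qed.

(* label_cascade A m is the (m+1)-fold wreath product of root-label stages. *)
Fixpoint label_cascade (A : finType) (m : nat) : stage A :=
  if m is m'.+1 then
    @tensorS A (label_cascade A m')
               (root_labels (prod A (pH (projT1 (label_cascade A m')))))
  else root_labels A.

Lemma label_cascade_U2_level (A : finType) m : cascade U2_level m.+1 (label_cascade A m).
Proof.
elim: m => [|m IHm]; first by constructor; apply: root_labels_U2_level.
by apply: cascadeS => //; apply: root_labels_U2_level.
Qed.

Lemma label_cascade_sim (A : finType) m (s s' : forest A) :
  evalF (projT2 (label_cascade A m)) s = evalF (projT2 (label_cascade A m)) s' ->
  sim m.+1 s s'.
Proof.
elim: m s s' => [|m IHm] s s' E.
  split=> t Ht; first by have [t' [Ht' Hl]] := root_labels_sub E Ht; exists t'.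
  by have [t' [Ht' Hl]] := root_labels_sub (esym E) Ht; exists t'.
move: E; rewrite /= !evalF_tensor => -[_ E].
set alpha := projT2 (label_cascade A m) in IHm E.
have sub f f' : evalF (projT2 (root_labels _)) (relabelF alpha f) =
                evalF (projT2 (root_labels _)) (relabelF alpha f') ->
    forall t, List.In t f -> exists t', List.In t' f' /\ label t = label t' /\
      sim m.+1 (kids t) (kids t').
  move=> Ef t /(List.in_map (relabelT alpha)) /(root_labels_sub Ef) [u [Hu Hl]].
  move: Hu Hl => /List.in_map_iff [t' [<- Ht']] Hl; exists t'; split => //.
  by case: t t' Hl {Ht'} => [a ts] [a' ts'] /= [-> /IHm].
split=> t Ht; first exact: sub E t Ht.
have [t' [Ht' [Hl Hsim]]] := sub _ _ (esym E) t Ht.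
by exists t'; split => //; split; [rewrite Hl | exact: sim_sym Hsim].
Qed.

Lemma factors_through_label_cascade (A : finType) Q (alpha : A -> pV Q) m :
  factors_through_alpha_k m.+1 alpha ->
  exists st : stage A, cascade U2_level m.+1 st /\ factors_through alpha (projT2 st).
Proof.
move=> Hfac; exists (label_cascade A m); split; first exact: label_cascade_U2_level.
by move=> s s' /label_cascade_sim; apply: Hfac.
Qed.

Lemma cascade_factors_through_definite (A : finType) Q (alpha : A -> pV Q) k :
  (exists st : stage A,
     cascade one_definite_FA k st /\ factors_through alpha (projT2 st)) ->
  definite k alpha.
Proof.
move=> [st [Hst Hfac]]; apply: factors_through_definite Hfac _.
by apply: cascade_definite Hst => B st' [].
Qed.

Theorem theorem2 (A : finType) (Q : preFA) (HQ : fa_struct Q)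
  (alpha : A -> pV Q) (k : nat) :
  onto_hom alpha HQ -> 0 < k ->
  [<-> definite k alpha;
       factors_through_alpha_k k alpha;
       exists st : stage A, cascade one_definite_FA k st /\
                            factors_through alpha (projT2 st);
       exists st : stage A, cascade U2_level k st /\
                            factors_through alpha (projT2 st)].
Proof.
move=> _; case: k => // m _.
have U2_one_definite (st : stage A) :
    cascade U2_level m.+1 st -> cascade one_definite_FA m.+1 st.
  exact: cascade_mono (@U2_level_one_definite_FA).
tfae=> [/(definite_factors_through_alpha_k HQ) //
       | /factors_through_label_cascade [st [/U2_one_definite Hst Hfac]]
       | /cascade_factors_through_definite/(definite_factors_through_alpha_k HQ)
       | [st [/U2_one_definite Hst Hfac]]].
- by exists st.
- exact: factors_through_label_cascade.
- by apply: cascade_factors_through_definite; exists st.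
Qed.
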